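(* Let $a,b\geq 0$ with $a+b\leq 1$. Then (1) $4ab\leq a+b$. (2) If moreover $a,b>0$, then the function $$x\mapsto S(a,b,x)=1-\frac{a^2b^2}{(a+b+1)(a+b)}-\frac{ab(a+1)(b+1)(a+b+ab+2)}{(a+b)(a+b+1)(a+b+2)}\,x$$ is negative for all $x\geq c(a,b)$, where $$c(a,b)=\frac{(a+b)(a+b-2ab)(a+b+1)}{ab\big((a+b+1)(a+b-2ab)+ab(a+b)\big)}.$$ *)

From Stdlib Require Import Reals.
Open Scope R_scope.

Definition S (a b x : R) : R :=
  1 - (a^2 * b^2) / ((a + b + 1) * (a + b))
    - (a * b * (a + 1) * (b + 1) * (a + b + a * b + 2))
        / ((a + b) * (a + b + 1) * (a + b + 2)) * x.

Definition c (a b : R) : R :=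
  ((a + b) * (a + b - 2 * a * b) * (a + b + 1))
  / (a * b * ((a + b + 1) * (a + b - 2 * a * b) + a * b * (a + b))).

(** Write [s = a + b] and [p = a b], so that [4p <= s^2 <= s].  The function
    [S a b] is affine in [x] with negative slope, so it suffices to show
    [S a b (c a b) < 0].  Clearing the (positive) denominators, [-S a b (c a b)]
    is [p] times the polynomial [gap_poly s p] over a positive quantity, and
    [gap_poly s p > 0] follows from [2p <= s^2/2] and [s <= 1]. *)
From Stdlib Require Import Reals Lra Psatz.
Open Scope R_scope.

Lemma four_mul_le_add (a b : R) :
  0 <= a -> 0 <= b -> a + b <= 1 -> 4 * a * b <= a + b.
Proof.
  intros ha hb hab.
  assert (0 <= (a + b) * (1 - (a + b))) by (apply Rmult_le_pos; lra).
  assert (0 <= (a - b) * (a - b)) by apply Rle_0_sqr.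
  nra.
Qed.

Lemma S_antitone (a b x y : R) :
  0 < a -> 0 < b -> x <= y -> S a b y <= S a b x.
Proof.
  intros ha hb hxy; unfold S.
  assert (0 < a * b * (a + 1) * (b + 1) * (a + b + a * b + 2)
              / ((a + b) * (a + b + 1) * (a + b + 2))).
  { apply Rdiv_pos_pos; repeat apply Rmult_lt_0_compat; nra. }
  nra.
Qed.

Definition gap_poly (s p : R) : R :=
  s^2 * (s + 1)^2 - 2 * p * s * (s + 1) * (s + 2) - 4 * p^2 * (s + 1)^2
    + s * (s + 2) * p^2.

Lemma gap_poly_pos (s p : R) :
  0 < s -> 0 < p -> 4 * p <= s^2 -> s <= 1 -> 0 < gap_poly s p.
Proof.
  intros hs hp hps hs1; unfold gap_poly.
  assert (lower : s^2 * (s + 1)^2 - 2 * p * s * (s + 1) * (s + 2)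
                  >= s^2 * (s + 1) * (2 - s^2) / 2).
  { assert (0 <= (s^2 - 4 * p) * (s * (s + 1) * (s + 2))).
    { apply Rmult_le_pos; [lra|]. repeat apply Rmult_le_pos; lra. }
    nra. }
  assert (upper : 4 * p^2 * (s + 1)^2 <= s^4 * (s + 1)^2 / 4).
  { assert (p^2 <= s^4 / 16) by nra. nra. }
  assert (compare : s^2 * (s + 1) * (2 - s^2) / 2 >= s^4 * (s + 1)^2 / 4).
  { assert (2 * (2 - s^2) - s^2 * (s + 1) >= 0) by nra.
    assert (0 <= s^2 * (s + 1)) by nra.
    nra. }
  assert (0 < s * (s + 2) * p^2) by (apply Rmult_lt_0_compat; nra).
  lra.
Qed.

Lemma S_at_c (a b : R) :
  0 < a -> 0 < b ->
  (a + b + 1) * (a + b - 2 * a * b) + a * b * (a + b) <> 0 ->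
  S a b (c a b) =
    - (a * b) * gap_poly (a + b) (a * b)
      / ((a + b) * (a + b + 1) * (a + b + 2)
         * ((a + b + 1) * (a + b - 2 * a * b) + a * b * (a + b))).
Proof.
  intros ha hb hD; unfold S, c, gap_poly.
  field; repeat split; nra.
Qed.

Lemma S_at_c_neg (a b : R) :
  0 < a -> 0 < b -> a + b <= 1 -> S a b (c a b) < 0.
Proof.
  intros ha hb hab.
  assert (hp : 0 < a * b) by nra.
  assert (hps : 4 * (a * b) <= (a + b)^2) by (pose proof (pow2_ge_0 (a - b)); nra).
  assert (hss : (a + b)^2 <= a + b) by nra.
  assert (h2p : 0 < a + b - 2 * a * b) by lra.
  assert (hD : 0 < (a + b + 1) * (a + b - 2 * a * b) + a * b * (a + b)) by nra.
  rewrite S_at_c by lra.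
  apply Rdiv_neg_pos.
  - pose proof (gap_poly_pos (a + b) (a * b) ltac:(lra) hp hps hab). nra.
  - repeat apply Rmult_lt_0_compat; lra.
Qed.

Theorem lemma5 (a b : R) (ha : 0 <= a) (hb : 0 <= b) (hab : a + b <= 1) :
  4 * a * b <= a + b /\
  (0 < a -> 0 < b -> forall x : R, c a b <= x -> S a b x < 0).
Proof.
  split; [exact (four_mul_le_add a b ha hb hab)|].
  intros pa pb x hx.
  apply (Rle_lt_trans _ (S a b (c a b))).
  - apply S_antitone; lra.
  - exact (S_at_c_neg a b pa pb hab).
Qed.
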